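(* Let $\mathcal{A}$ be a collection of pairwise non-parallel hyperplanes in $Q=S_1\times\cdots\times S_n$, let $0\le a\le n$, let $\mathbb{P}_a$ be a probability measure on $Q_a$, let $\delta_{a+1},\dots,\delta_n\in[0,1/2]$, and let $\mathbb{P}_k$ ($a\le k\le n$) be defined as in the context. Let $a\le k\le n$ and let $A$ be any hyperplane in $Q$ with $F(A)\subseteq[k]$ (viewed as a subset of $Q_k$). If $F(A) = I\cup J$ with $I\subseteq[a]$ and $J\subseteq[a+1,k]$, then $\mathbb{P}_k(A)\le c(I)\,\nu(J)$.
   Context: $S_1,\dots,S_n$ are finite sets each with at least two elements; $Q_k = S_1\times\cdots\times S_k$. A hyperplane is $A = A_1\times\cdots\times A_n\subseteq Q$ with each $A_k$ either $S_k$ or a singleton in $S_k$; $F(A)=\{k: A_k\text{ is a singleton}\}$; hyperplanes are parallel if they have the same $F$. Hyperplanes in $\mathcal{A}$ have non-empty $F(A)$; write $\mathcal{A}=\{A_F:F\in\mathcal{F}\}$. A set $X\subseteq Q_k$ is identified with $X\times S_{k+1}\times\cdots\times S_n$; a hyperplane with $F(A)\subseteq[k]$ is viewed as a subset of $Q_k$. Let $\mathcal{F}_k=\{F\in\mathcal{F}:F\subseteq[k]\}$, $\mathcal{N}_k=\mathcal{F}_k\setminus\mathcal{F}_{k-1}$, $B_k=\bigcup_{F\in\mathcal{N}_k}A_F\subseteq Q_k$. For $k>a$, given $\mathbb{P}_{k-1}$ on $Q_{k-1}$, let $\alpha_k(x)=|\{y\in S_k:(x,y)\in B_k\}|/|S_k|$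 for $x\in Q_{k-1}$, and define $\mathbb{P}_k(x,y)=\max\{0,\frac{\alpha_k(x)-\delta_k}{\alpha_k(x)(1-\delta_k)}\}\frac{\mathbb{P}_{k-1}(x)}{|S_k|}$ if $(x,y)\in B_k$ and $\mathbb{P}_k(x,y)=\min\{\frac{1}{1-\alpha_k(x)},\frac{1}{1-\delta_k}\}\frac{\mathbb{P}_{k-1}(x)}{|S_k|}$ otherwise. For $I\subseteq[a]$, $c(I)=\max\{\mathbb{P}_a(H):H\text{ a hyperplane in }Q_a\text{ with }F(H)=I\}$; for $J\subseteq[a+1,n]$, $\nu(J)=\prod_{j\in J}\frac{1}{(1-\delta_j)|S_j|}$. *)

From mathcomp Require Import all_boot all_order all_algebra.
Set Implicit Arguments. Unset Strict Implicit. Unset Printing Implicit Defensive.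
Import Order.TTheory GRing.Theory Num.Theory.
Local Open Scope ring_scope.

(* Conventions (0-based): coordinates are 0,...,n-1 (paper's coordinate i+1 is
   our coordinate i).  S_i is modelled as {0,...,m i - 1}.  Points of
   Q_k = S_0 x ... x S_{k-1} are lists of naturals of length k. *)

Fixpoint Qseq (m : nat -> nat) (k : nat) : seq (seq nat) :=
  match k with
  | 0 => [:: [::]]
  | k'.+1 => [seq rcons x y | x <- Qseq m k', y <- iota 0 (m k')]
  end.

(* A hyperplane of Q: h i = Some v means A_i = {v}; h i = None means A_i = S_i. *)
Definition hyp (n : nat) := {ffun 'I_n -> option nat}.

Definition hyp_valid (n : nat) (m : nat -> nat) (h : hyp n) : Prop :=
  forall (i : 'I_n) (v : nat), h i = Some v -> (v < m i)%N.

Definition Fh (n : nat) (h : hyp n) : {set 'I_n} := [set i | h i != None].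

Definition inhyp (n : nat) (h : hyp n) (x : seq nat) : bool :=
  [forall i : 'I_n, if h i is Some v then nth 0%N x i == v else true].

Definition measQ (R : realFieldType) (m : nat -> nat) (k : nat)
  (P : seq nat -> R) (A : seq nat -> bool) : R :=
  \sum_(x <- Qseq m k | A x) P x.

(* z ∈ B_{k+1} (coordinate k is the new one): z lies in some A_F with
   F ⊆ {0..k} and k ∈ F, i.e. F ∈ N_{k+1}. *)
Definition inB (n : nat) (Aset : seq (hyp n)) (k : nat) (z : seq nat) : bool :=
  has (fun h => [&& [forall i in Fh h, (i < k.+1)%N],
                    [exists i in Fh h, (i == k :> nat)] & inhyp h z]) Aset.

Definition alpha (R : realFieldType) (n : nat) (m : nat -> nat)
  (Aset : seq (hyp n)) (k : nat) (x : seq nat) : R :=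
  (count (fun y => inB Aset k (rcons x y)) (iota 0 (m k)))%:R / (m k)%:R.

(* From P on Q_k build P on Q_{k+1}, adding coordinate k with parameter d
   (paper's delta_{k+1}). *)
Definition Pstep (R : realFieldType) (n : nat) (m : nat -> nat)
  (Aset : seq (hyp n)) (k : nat) (d : R) (P : seq nat -> R) (z : seq nat) : R :=
  let x := take k z in
  let al := alpha R m Aset k x in
  if inB Aset k z then
    Num.max 0 ((al - d) / (al * (1 - d))) * P x / (m k)%:R
  else
    Num.min (1 / (1 - al)) (1 / (1 - d)) * P x / (m k)%:R.

Fixpoint Piter (R : realFieldType) (n : nat) (m : nat -> nat)
  (Aset : seq (hyp n)) (a : nat) (delta : nat -> R) (Pa : seq nat -> R)
  (j : nat) : seq nat -> R :=
  match j with
  | 0 => Pa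
  | j'.+1 => Pstep m Aset (a + j') (delta (a + j'))
               (Piter m Aset a delta Pa j')
  end.

Definition Pk (R : realFieldType) (n : nat) (m : nat -> nat)
  (Aset : seq (hyp n)) (a : nat) (delta : nat -> R) (Pa : seq nat -> R)
  (k : nat) : seq nat -> R :=
  Piter m Aset a delta Pa (k - a).

Definition hyp_of (n : nat) (I : {set 'I_n}) (x : seq nat) : hyp n :=
  [ffun i => if i \in I then Some (nth 0%N x i) else None].

(* c(I) = max of P_a(H) over hyperplanes H of Q_a with F(H) = I (for I ⊆ [a]);
   every such H is hyp_of I x for some x in Q_a, and P_a >= 0 so the default 0
   of the max is harmless. *)
Definition cI (R : realFieldType) (n : nat) (m : nat -> nat) (a : nat)
  (Pa : seq nat -> R) (I : {set 'I_n}) : R :=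
  \big[Num.max/0]_(x <- Qseq m a) measQ m a Pa (inhyp (hyp_of I x)).

Definition nu (R : realFieldType) (n : nat) (m : nat -> nat) (delta : nat -> R)
  (J : {set 'I_n}) : R :=
  \prod_(j in J) (1 / ((1 - delta j) * (m j)%:R)).

(* P_k arises from P_(k-1) by spreading the mass of each x in Q_(k-1) over its
   fibre {(x, y) : y in S_k}.  Every point of the fibre receives at most
   P_(k-1)(x) / ((1 - delta_k) |S_k|), and the whole fibre at most P_(k-1)(x),
   since alpha w_in + (1 - alpha) w_out <= 1 for the two weights of the
   construction.  If coordinate k is free in A, then A is
   a union of whole fibres and P_k(A) <= P_(k-1)(A); if it is fixed, then A meets
   every fibre in one point and P_k(A) <= P_(k-1)(A') nu({k}), where A' frees
   coordinate k.  For k = a the bound P_a(A) <= c(I) is the definition of c. *)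

From mathcomp Require Import all_boot all_order all_algebra.
From mathcomp Require Import ring lra zify.
Set Implicit Arguments.
Unset Strict Implicit.
Unset Printing Implicit Defensive.
Import Order.TTheory GRing.Theory Num.Theory.
Local Open Scope ring_scope.

Lemma size_Qseq m k x : x \in Qseq m k -> size x = k.
Proof.
elim: k x => [|k IHk] x /=; first by rewrite inE => /eqP ->.
by case/allpairsP=> [[x' y]] /= [/IHk <- _ ->]; rewrite size_rcons.
Qed.

Lemma mem_Qseq m k x : size x = k ->
  (forall i, (i < k)%N -> (nth 0%N x i < m i)%N) -> x \in Qseq m k.
Proof.
elim: k x => [|k IHk] x; first by move/size0nil ->; rewrite inE.
case/lastP: x => [//|x y]; rewrite size_rcons => -[size_x] x_lt /=.
apply/allpairsP; exists (x, y); split => //=.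
  apply: IHk => // i lt_ik.
  by have := x_lt i (leqW lt_ik); rewrite nth_rcons size_x lt_ik.
by rewrite mem_iota add0n; have := x_lt k (ltnSn k); rewrite nth_rcons size_x ltnn eqxx.
Qed.

Lemma big_Qseq_S (R : realFieldType) m k (F : seq nat -> R) :
  \sum_(z <- Qseq m k.+1) F z =
  \sum_(x <- Qseq m k) \sum_(y <- iota 0 (m k)) F (rcons x y).
Proof. exact: big_allpairs_dep. Qed.

Lemma sum_if_count (R : realFieldType) (s : seq nat) (b : pred nat) (c1 c2 : R) :
  \sum_(y <- s) (if b y then c1 else c2) =
  (count b s)%:R * c1 + (count (predC b) s)%:R * c2.
Proof.
elim: s => [|y s IHs]; first by rewrite big_nil !mul0r addr0.
by rewrite big_cons IHs /= !natrD; case: (b y) => /=; ring.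
Qed.

Lemma mem_Fh n (A : hyp n) i : (i \in Fh A) = (A i != None).
Proof. by rewrite inE. Qed.

Definition hyp_free n (A : hyp n) (i0 : 'I_n) : hyp n :=
  [ffun i => if i == i0 then None else A i].

Lemma Fh_hyp_free n (A : hyp n) i0 : Fh (hyp_free A i0) = Fh A :\ i0.
Proof.
apply/setP => i; rewrite in_setD1 !mem_Fh ffunE.
by case: (eqVneq i i0) => [->|i_neq]; rewrite ?eqxx.
Qed.

Lemma hyp_free_valid n m (A : hyp n) i0 :
  hyp_valid m A -> hyp_valid m (hyp_free A i0).
Proof. by move=> validA i v; rewrite ffunE; case: eqP => // _ /validA. Qed.

Lemma inhyp_rcons n (A : hyp n) x y :
  (forall i : 'I_n, i \in Fh A -> (i < size x)%N) ->
  inhyp A (rcons x y) = inhyp A x.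
Proof.
move=> FA_lt; apply: eq_forallb => i; case Ai: (A i) => [v|] //.
by rewrite nth_rcons FA_lt ?mem_Fh ?Ai.
Qed.

Lemma inhyp_rcons_fixed n (A : hyp n) (i0 : 'I_n) v x y :
  A i0 = Some v -> (i0 : nat) = size x ->
  (forall i : 'I_n, i \in Fh A -> (i <= size x)%N) ->
  inhyp A (rcons x y) = inhyp (hyp_free A i0) x && (y == v).
Proof.
move=> Ai0 i0_x FA_le.
have lt_x i w : i != i0 -> A i = Some w -> (i < size x)%N.
  move=> i_neq Ai; have /FA_le : i \in Fh A by rewrite mem_Fh Ai.
  by rewrite leq_eqVlt -i0_x (inj_eq val_inj) (negbTE i_neq).
apply/forallP/andP => [inA | [/forallP inA' /eqP ->] i].
  split; last by have := inA i0; rewrite Ai0 nth_rcons i0_x ltnn eqxx.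
  apply/forallP => i; have := inA i; rewrite ffunE.
  case: eqP => // /eqP i_neq; case Ai: (A i) => [w|] //.
  by rewrite nth_rcons (lt_x i w).
have := inA' i; rewrite ffunE; case: eqP => [-> _ | /eqP i_neq].
  by rewrite Ai0 nth_rcons i0_x ltnn eqxx.
by case Ai: (A i) => [w|] //; rewrite nth_rcons (lt_x i w).
Qed.

Section LastCoordinate.

Variables (n a k : nat) (A : hyp n) (I J : {set 'I_n}) (i0 : 'I_n).
Hypotheses (i0_k : (i0 : nat) = k) (le_ak : (a <= k)%N)
  (I_lt : forall i : 'I_n, i \in I -> (i < a)%N)
  (J_bnd : forall i : 'I_n, i \in J -> (a <= i < k.+1)%N)
  (FA : Fh A = I :|: J).

Lemma Fh_le_last i : i \in Fh A -> (i <= k)%N.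
Proof.
rewrite FA in_setU => /orP[/I_lt lt_ia | /J_bnd /andP[_ //]].
exact: leq_trans (ltnW lt_ia) le_ak.
Qed.

Lemma ltn_last (i : 'I_n) : (i <= k)%N -> i != i0 -> (i < k)%N.
Proof.
move=> le_ik; rewrite ltn_neqAle le_ik andbT.
by apply: contra => /eqP i_k; rewrite -val_eqE /= i_k i0_k.
Qed.

Lemma last_notin_I : i0 \notin I.
Proof. by apply/negP => /I_lt; rewrite i0_k ltnNge le_ak. Qed.

Lemma Fh_lt_last_free : A i0 = None -> forall i, i \in Fh A -> (i < k)%N.
Proof.
move=> Ai0 i FAi; apply: ltn_last (Fh_le_last FAi) _.
by apply: contraTneq FAi => ->; rewrite mem_Fh Ai0.
Qed.

Lemma J_lt_last_free : A i0 = None -> forall i, i \in J -> (a <= i < k)%N.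
Proof.
move=> Ai0 i Ji; have FAi : i \in Fh A by rewrite FA in_setU Ji orbT.
by have /andP[-> _] := J_bnd Ji; apply: Fh_lt_last_free.
Qed.

Lemma last_in_J_fixed v : A i0 = Some v -> i0 \in J.
Proof.
move=> Ai0; have : i0 \in Fh A by rewrite mem_Fh Ai0.
by rewrite FA in_setU (negbTE last_notin_I).
Qed.

Lemma J_lt_last_fixed i : i \in J :\ i0 -> (a <= i < k)%N.
Proof.
rewrite in_setD1 => /andP[i_neq /J_bnd /andP[-> le_ik]].
exact: ltn_last le_ik i_neq.
Qed.

Lemma Fh_hyp_free_last : Fh (hyp_free A i0) = I :|: J :\ i0.
Proof.
apply/setP => i; rewrite Fh_hyp_free FA !inE.
by case: eqVneq => [->|]; rewrite ?(negbTE last_notin_I).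
Qed.

End LastCoordinate.

Lemma nu_setD1 (R : realFieldType) n m (delta : nat -> R) (J : {set 'I_n}) i0 :
  i0 \in J ->
  nu m delta J = nu m delta (J :\ i0) * (1 / ((1 - delta i0) * (m i0)%:R)).
Proof.
move=> i0_J; rewrite /nu (bigD1 i0 i0_J) /= [LHS]mulrC; congr (_ * _).
by apply: eq_bigl => i; rewrite in_setD1 andbC.
Qed.

Definition in_weight (R : realFieldType) (al d : R) : R :=
  Num.max 0 ((al - d) / (al * (1 - d))).

Definition out_weight (R : realFieldType) (al d : R) : R :=
  Num.min (1 / (1 - al)) (1 / (1 - d)).

Definition step_weight (R : realFieldType) (b : bool) (al d : R) : R :=
  if b then in_weight al d else out_weight al d.

Section Weights.

Variables (R : realFieldType) (al d : R).
Hypotheses (al_ge0 : 0 <= al) (al_le1 : al <= 1) (d_ge0 : 0 <= d) (d_lt1 : d < 1).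

Lemma in_weight_ge0 : 0 <= in_weight al d.
Proof. by rewrite le_max lexx. Qed.

Lemma out_weight_ge0 : 0 <= out_weight al d.
Proof. by rewrite le_min !divr_ge0 ?ler01 ?subr_ge0 // ltW. Qed.

Lemma in_weight_le : in_weight al d <= 1 / (1 - d).
Proof.
have d1_gt0 : 0 < 1 - d by rewrite subr_gt0.
have inv_ge0 : 0 <= 1 / (1 - d) by rewrite divr_ge0 ?ler01 ?ltW.
rewrite ge_max inv_ge0 /=.
have [al_le_d | d_lt_al] := lerP al d.
  apply: le_trans inv_ge0.
  by rewrite mulr_le0_ge0 ?subr_le0 // invr_ge0 mulr_ge0 // ltW.
have al_gt0 : 0 < al by apply: le_lt_trans d_lt_al.
rewrite invfM mulrA ler_pM2r ?invr_gt0 // ler_pdivrMr // mul1r.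
by rewrite lerBlDr lerDl.
Qed.

Lemma out_weight_le : out_weight al d <= 1 / (1 - d).
Proof. by rewrite ge_min lexx orbT. Qed.

Lemma mean_weight_le1 : al * in_weight al d + (1 - al) * out_weight al d <= 1.
Proof.
have d1_gt0 : 0 < 1 - d by rewrite subr_gt0.
have [al_le_d | d_lt_al] := lerP al d.
  have -> : in_weight al d = 0.
    by apply/max_idPl; rewrite mulr_le0_ge0 ?subr_le0 // invr_ge0 mulr_ge0 // ltW.
  have al1_gt0 : 0 < 1 - al by rewrite subr_gt0 (le_lt_trans al_le_d).
  rewrite mulr0 add0r.
  apply: le_trans (ler_wpM2l (ltW al1_gt0) (_ : _ <= 1 / (1 - al))) _.
    by rewrite ge_min lexx.
  by rewrite div1r mulfV ?lt0r_neq0.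
have al_gt0 : 0 < al by apply: le_lt_trans d_lt_al.
have -> : al * in_weight al d = (al - d) / (1 - d).
  rewrite /in_weight max_r ?divr_ge0 ?subr_ge0 ?ltW ?mulr_gt0 //.
  by field; rewrite !gt_eqF.
rewrite -[leRHS](_ : (al - d) / (1 - d) + (1 - al) * (1 / (1 - d)) = 1).
  by rewrite lerD2l ler_wpM2l ?subr_ge0 // out_weight_le.
by field; rewrite gt_eqF.
Qed.

Lemma step_weight_ge0 b : 0 <= step_weight b al d.
Proof. by case: b; [apply: in_weight_ge0 | apply: out_weight_ge0]. Qed.

Lemma step_weight_le b : step_weight b al d <= 1 / (1 - d).
Proof. by case: b; [apply: in_weight_le | apply: out_weight_le]. Qed.

End Weights.

Lemma alpha_ge0 (R : realFieldType) n m (Aset : seq (hyp n)) k x :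
  0 <= alpha R m Aset k x.
Proof. by rewrite divr_ge0. Qed.

Lemma alpha_le1 (R : realFieldType) n m (Aset : seq (hyp n)) k x :
  alpha R m Aset k x <= 1.
Proof.
rewrite /alpha; have [->|mk_gt0] := posnP (m k); first by rewrite invr0 mulr0 ler01.
rewrite ler_pdivrMr ?ltr0n // mul1r ler_nat.
by rewrite -[leqRHS](size_iota 0) count_size.
Qed.

Section Step.

Variables (R : realFieldType) (n : nat) (m : nat -> nat) (Aset : seq (hyp n)).
Variables (k : nat) (d : R) (P : seq nat -> R).
Hypotheses (d_ge0 : 0 <= d) (d_lt1 : d < 1).

Lemma Pstep_rcons x y : size x = k ->
  Pstep m Aset k d P (rcons x y) =
  step_weight (inB Aset k (rcons x y)) (alpha R m Aset k x) d * P x / (m k)%:R.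
Proof.
move=> size_x; rewrite /Pstep.
have -> : take k (rcons x y) = x by rewrite -cats1 -size_x take_size_cat.
by rewrite /step_weight; case: ifP.
Qed.

Lemma Pstep_ge0 x y : size x = k -> 0 <= P x -> 0 <= Pstep m Aset k d P (rcons x y).
Proof.
move=> /Pstep_rcons-> P_ge0.
by rewrite mulr_ge0 ?invr_ge0 // mulr_ge0 // step_weight_ge0 ?alpha_ge0 ?alpha_le1.
Qed.

Lemma Pstep_le x y : size x = k -> 0 <= P x ->
  Pstep m Aset k d P (rcons x y) <= P x * (1 / ((1 - d) * (m k)%:R)).
Proof.
move=> /Pstep_rcons-> P_ge0.
rewrite [leRHS](_ : _ = 1 / (1 - d) * P x / (m k)%:R); last by rewrite invfM; ring.
rewrite ler_wpM2r ?invr_ge0 // ler_wpM2r //.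
by rewrite step_weight_le ?alpha_ge0 ?alpha_le1.
Qed.

Lemma Pstep_fibre_le x : (0 < m k)%N -> size x = k -> 0 <= P x ->
  \sum_(y <- iota 0 (m k)) Pstep m Aset k d P (rcons x y) <= P x.
Proof.
move=> mk_gt0 size_x P_ge0.
under eq_bigr => y _ do rewrite Pstep_rcons // -mulrA.
rewrite -big_distrl /= sum_if_count.
set al := alpha R m Aset k x; set b := fun y => inB Aset k (rcons x y).
have al_def : al = (count b (iota 0 (m k)))%:R / (m k)%:R by [].
have countC : (count (predC b) (iota 0 (m k)))%:R =
              (m k)%:R - (count b (iota 0 (m k)))%:R :> R.
  by apply/eqP; rewrite eq_sym subr_eq -natrD addnC count_predC size_iota.
have mk_neq0 : (m k)%:R != 0 :> R by rewrite pnatr_eq0 -lt0n.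
rewrite countC [leLHS](_ : _ = P x * (al * in_weight al d + (1 - al) * out_weight al d)).
  by rewrite ler_piMr // mean_weight_le1 ?alpha_ge0 ?alpha_le1.
by rewrite al_def; field.
Qed.

Hypothesis P_ge0 : forall x, x \in Qseq m k -> 0 <= P x.

Lemma Pstep_ge0_Qseq z : z \in Qseq m k.+1 -> 0 <= Pstep m Aset k d P z.
Proof.
case/allpairsP => -[x y] /= [Qx _ ->].
by apply: Pstep_ge0; [apply: size_Qseq Qx | apply: P_ge0].
Qed.

Lemma measQ_Pstep_free (A : hyp n) : (0 < m k)%N ->
  (forall i : 'I_n, i \in Fh A -> (i < k)%N) ->
  measQ m k.+1 (Pstep m Aset k d P) (inhyp A) <= measQ m k P (inhyp A).
Proof.
move=> mk_gt0 FA_lt.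
rewrite /measQ big_mkcond big_Qseq_S [leRHS]big_mkcond.
rewrite [leLHS]big_seq [leRHS]big_seq; apply: ler_sum => x Qx.
have size_x := size_Qseq Qx.
under eq_bigr => y _ do rewrite inhyp_rcons ?size_x //.
case: (inhyp A x); last by rewrite big1.
exact: Pstep_fibre_le (P_ge0 Qx).
Qed.

Lemma measQ_Pstep_fixed (A : hyp n) (i0 : 'I_n) v :
  (i0 : nat) = k -> A i0 = Some v -> (v < m k)%N ->
  (forall i : 'I_n, i \in Fh A -> (i <= k)%N) ->
  measQ m k.+1 (Pstep m Aset k d P) (inhyp A) <=
  measQ m k P (inhyp (hyp_free A i0)) * (1 / ((1 - d) * (m k)%:R)).
Proof.
move=> i0_k Ai0 v_lt FA_le.
rewrite /measQ big_mkcond big_Qseq_S [X in X * _]big_mkcond big_distrl /=.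
rewrite [leLHS]big_seq [leRHS]big_seq; apply: ler_sum => x Qx.
have size_x := size_Qseq Qx.
under eq_bigr => y _ do rewrite (inhyp_rcons_fixed _ Ai0) ?size_x //.
rewrite (bigD1_seq v) ?mem_iota ?iota_uniq //= eqxx andbT big1 => [|y /negbTE->];
  last by rewrite andbF.
rewrite addr0; case: ifP => _; last by rewrite mul0r.
exact: Pstep_le (P_ge0 Qx).
Qed.

End Step.

Lemma measQ_le_cI (R : realFieldType) n m a (Pa : seq nat -> R) (A : hyp n) :
  (a <= n)%N -> (forall i, (i < a)%N -> (0 < m i)%N) -> hyp_valid m A ->
  (forall i : 'I_n, i \in Fh A -> (i < a)%N) ->
  measQ m a Pa (inhyp A) <= cI m a Pa (Fh A).
Proof.
move=> le_an m_gt0 validA FA_lt.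
pose x0 := take a [seq odflt 0%N (A i) | i <- enum 'I_n].
have x0_nth (i : 'I_n) : (i < a)%N -> nth 0%N x0 i = odflt 0%N (A i).
  by move=> lt_ia; rewrite nth_take // (nth_map i) ?size_enum_ord // nth_ord_enum.
have Qx0 : x0 \in Qseq m a.
  apply: mem_Qseq => [|i lt_ia]; first by rewrite size_takel // size_map size_enum_ord.
  have lt_in := leq_trans lt_ia le_an.
  rewrite (x0_nth (Ordinal lt_in)) //; case Ai: (A _) => [v|] /=; last exact: m_gt0.
  exact: validA Ai.
have x0_A : hyp_of (Fh A) x0 = A.
  apply/ffunP => i; rewrite ffunE mem_Fh.
  by case Ai: (A i) => [v|] //=; rewrite x0_nth ?Ai // FA_lt ?mem_Fh ?Ai.
rewrite -{1}x0_A.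
exact: (le_bigmax_seq _ _ xpredT (fun x => measQ m a Pa (inhyp (hyp_of (Fh A) x))) Qx0).
Qed.

Section Iteration.

Variables (R : realFieldType) (n : nat) (m : nat -> nat) (Aset : seq (hyp n)).
Variables (a : nat) (Pa : seq nat -> R) (delta : nat -> R).
Hypotheses (m_gt0 : forall i, (i < n)%N -> (0 < m i)%N)
  (Pa_ge0 : forall x, x \in Qseq m a -> 0 <= Pa x)
  (delta_ge0 : forall i, (a <= i < n)%N -> 0 <= delta i)
  (delta_lt1 : forall i, (a <= i < n)%N -> delta i < 1).

Lemma Piter_ge0 j : (a + j <= n)%N ->
  forall z, z \in Qseq m (a + j) -> 0 <= Piter m Aset a delta Pa j z.
Proof.
elim: j => [|j IHj]; first by rewrite addn0.
rewrite addnS => lt_n; have le_n := ltnW lt_n.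
have a_le : (a <= a + j < n)%N by rewrite leq_addr.
exact: Pstep_ge0_Qseq (delta_lt1 a_le) (IHj le_n).
Qed.

Lemma measQ_Piter_le j (A : hyp n) (I J : {set 'I_n}) : (a + j <= n)%N ->
  hyp_valid m A ->
  (forall i : 'I_n, i \in I -> (i < a)%N) ->
  (forall i : 'I_n, i \in J -> (a <= i < a + j)%N) ->
  Fh A = I :|: J ->
  measQ m (a + j) (Piter m Aset a delta Pa j) (inhyp A) <= cI m a Pa I * nu m delta J.
Proof.
elim: j A J => [|j IHj] A J le_n validA I_lt J_bnd FA.
  rewrite addn0 in le_n J_bnd *.
  have J0 : J = set0 by apply/setP => i; rewrite inE; apply/negP => /J_bnd; lia.
  rewrite J0 setU0 in FA; rewrite J0 /nu big_set0 mulr1 -FA.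
  apply: measQ_le_cI => // [i lt_ia | i]; first exact/m_gt0/(leq_trans lt_ia).
  by rewrite FA; apply: I_lt.
rewrite addnS in le_n J_bnd *; set k := (a + j)%N in le_n J_bnd *.
have le_k : (a + j <= n)%N := ltnW le_n.
have k_bnd : (a <= k < n)%N by rewrite leq_addr.
have d_ge0 := delta_ge0 k_bnd; have d_lt1 := delta_lt1 k_bnd.
have P_ge0 := Piter_ge0 le_k.
pose i0 : 'I_n := Ordinal le_n.
have i0_k : (i0 : nat) = k by [].
have le_ak : (a <= k)%N by rewrite leq_addr.
case Ai0: (A i0) => [v|]; last first.
  apply: le_trans (measQ_Pstep_free Aset d_ge0 d_lt1 P_ge0 (m_gt0 le_n) _) _.
    exact: Fh_lt_last_free i0_k le_ak I_lt J_bnd FA Ai0.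
  exact: IHj A J le_k validA I_lt (J_lt_last_free i0_k le_ak I_lt J_bnd FA Ai0) FA.
rewrite (nu_setD1 m delta (last_in_J_fixed i0_k le_ak I_lt FA Ai0)) mulrA.
apply: le_trans (measQ_Pstep_fixed Aset d_ge0 d_lt1 P_ge0 i0_k Ai0 (validA _ _ Ai0)
  (Fh_le_last le_ak I_lt J_bnd FA)) _.
apply: ler_wpM2r; first by rewrite divr_ge0 ?ler01 ?mulr_ge0 ?ler0n ?subr_ge0 ?ltW.
exact: IHj _ _ le_k (hyp_free_valid validA) I_lt (J_lt_last_fixed i0_k J_bnd)
  (Fh_hyp_free_last i0_k le_ak I_lt FA).
Qed.

End Iteration.

Theorem lemma3p3 (R : realFieldType) (n : nat) (m : nat -> nat)
  (Aset : seq (hyp n)) (a : nat) (Pa : seq nat -> R) (delta : nat -> R)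
  (k : nat) (A : hyp n) (I J : {set 'I_n}) :
  (forall i : nat, (i < n)%N -> (2 <= m i)%N) ->
  (forall h, h \in Aset -> hyp_valid m h) ->
  (forall h, h \in Aset -> Fh h != set0) ->
  uniq [seq Fh h | h <- Aset] ->
  (a <= n)%N ->
  (forall x, x \in Qseq m a -> 0 <= Pa x) ->
  \sum_(x <- Qseq m a) Pa x = 1 ->
  (forall i : nat, (a <= i < n)%N -> 0 <= delta i <= 1 / 2) ->
  (a <= k <= n)%N ->
  hyp_valid m A ->
  (forall i : 'I_n, i \in Fh A -> (i < k)%N) ->
  (forall i : 'I_n, i \in I -> (i < a)%N) ->
  (forall j : 'I_n, j \in J -> (a <= j < k)%N) ->
  Fh A = I :|: J ->
  measQ m k (Pk m Aset a delta Pa k) (inhyp A) <= cI m a Pa I * nu m delta J.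
Proof.
move=> m_ge2 _ _ _ _ Pa_ge0 _ delta_bnd /andP[le_ak le_kn] validA _ I_lt J_bnd FA.
have m_gt0 i : (i < n)%N -> (0 < m i)%N by move/m_ge2; apply: leq_trans.
have delta_ge0 i : (a <= i < n)%N -> 0 <= delta i by case/delta_bnd/andP.
have delta_lt1 i : (a <= i < n)%N -> delta i < 1 by case/delta_bnd/andP; lra.
rewrite /Pk; move: (k - a)%N (subnKC le_ak) => j k_def; subst k.
exact: measQ_Piter_le.
Qed.
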